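(* Let $N\ge2$, $T=\{x\in\mathbb{R}^N:1<|x|<2\}$, $2<p<2^*$ ($2^*=\frac{2N}{N-2}$ if $N\ge3$, $+\infty$ if $N=2$), $\lambda_1$ the first Dirichlet eigenvalue of $-\Delta$ on $T$, and for $\lambda>-\lambda_1$ let $u_\lambda=u_\lambda(r)$, $r=|x|\in(1,2)$, be the unique positive solution in $H^1_{0,rad}(T)$ of $-\Delta u+\lambda u=u^{p-1}$ in $T$, $u=0$ on $\partial T$. Then $u_\lambda$ has a unique maximum point $\bar r_\lambda\in(1,2)$, and $u_\lambda'>0$ on $(1,\bar r_\lambda)$, $u_\lambda'<0$ on $(\bar r_\lambda,2)$. *)

From Stdlib Require Import Reals.
From Coquelicot Require Import Coquelicot.
Open Scope R_scope.

(* Radial reduction: for a radial function x |-> u(|x|) on the annulus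
   T = {1 < |x| < 2} in R^N, -Delta u = -(u'' + (N-1)/r u'). *)

Definition radial_test (phi : R -> R) : Prop :=
  (forall r, 1 <= r <= 2 -> ex_derive phi r) /\
  (forall r, 1 <= r <= 2 -> continuous (Derive phi) r) /\
  phi 1 = 0 /\ phi 2 = 0 /\
  (exists r, 1 < r < 2 /\ phi r <> 0).

(* Rayleigh quotient  int_T |grad phi|^2 / int_T phi^2  for radial phi
   (the common factor |S^{N-1}| cancels). *)
Definition rayleigh (N : nat) (phi : R -> R) : R :=
  RInt (fun r => (Derive phi r) ^ 2 * r ^ (N - 1)) 1 2 /
  RInt (fun r => (phi r) ^ 2 * r ^ (N - 1)) 1 2.

Definition lambda1 (N : nat) : Rbar :=
  Glb_Rbar (fun q => exists phi, radial_test phi /\ q = rayleigh N phi).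

Definition subcritical (N : nat) (p : R) : Prop :=
  2 < p /\ ((3 <= N)%nat -> p < 2 * INR N / (INR N - 2)).

Definition pos_rad_sol (N : nat) (p lambda : R) (u : R -> R) : Prop :=
  (forall r, 1 <= r <= 2 -> continuity_pt u r) /\
  (forall r, 1 < r < 2 -> ex_derive u r /\ ex_derive (Derive u) r) /\
  u 1 = 0 /\ u 2 = 0 /\
  (forall r, 1 < r < 2 -> 0 < u r) /\
  (forall r, 1 < r < 2 ->
     - (Derive (Derive u) r + (INR N - 1) / r * Derive u r) + lambda * u r
       = Rpower (u r) (p - 1)).

From Stdlib Require Import Reals Lra Lia.
From Coquelicot Require Import Coquelicot.
Open Scope R_scope.

(* Along a radial solution the energy E = u'^2/2 + u^p/p - lambda u^2/2 satisfies
   E' = -(N-1)/r u'^2 <= 0.  At a critical point r0 this gives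
   E(r0) >= lim_{r -> 2} E(r) >= 0, and since p > 2 the equation then forces
   u''(r0) = lambda u(r0) - u(r0)^(p-1) < 0.  A function all of whose critical
   points are strict local maxima has at most one of them, and is strictly
   monotone on each side of it. *)

Lemma continuity_pt_of_ex_derive (f : R -> R) x : ex_derive f x -> continuity_pt f x.
Proof. intros Hf; apply continuity_pt_filterlim; exact (ex_derive_continuous f x Hf). Qed.

Lemma MVT_Derive (f : R -> R) a b : a < b -> (forall x, a <= x <= b -> ex_derive f x) ->
  exists c, a < c < b /\ f b - f a = Derive f c * (b - a).
Proof.
  intros Hab Hf.
  destruct (MVT_cor2 f (Derive f) a b Hab) as [c [Hfc Hc]].
  - intros x Hx; apply is_derive_Reals, Derive_correct, Hf, Hx.
  - now exists c.
Qed.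

Lemma Derive_pos_lt (f : R -> R) a b : a < b -> (forall x, a <= x <= b -> ex_derive f x) ->
  (forall x, a < x < b -> 0 < Derive f x) -> f a < f b.
Proof.
  intros Hab Hf Hpos; destruct (MVT_Derive f a b Hab Hf) as [c [Hc Hfc]].
  pose proof (Hpos c Hc); nra.
Qed.

Lemma Derive_neg_lt (f : R -> R) a b : a < b -> (forall x, a <= x <= b -> ex_derive f x) ->
  (forall x, a < x < b -> Derive f x < 0) -> f b < f a.
Proof.
  intros Hab Hf Hneg; destruct (MVT_Derive f a b Hab Hf) as [c [Hc Hfc]].
  pose proof (Hneg c Hc); nra.
Qed.

Lemma Derive_nonpos_le (f : R -> R) a b : a <= b -> (forall x, a <= x <= b -> ex_derive f x) ->
  (forall x, a < x < b -> Derive f x <= 0) -> f b <= f a.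
Proof.
  intros [Hab | ->] Hf Hneg; [|lra].
  destruct (MVT_Derive f a b Hab Hf) as [c [Hc Hfc]].
  pose proof (Hneg c Hc); nra.
Qed.

Lemma Derive_pos_locally (f : R -> R) x : ex_derive f x -> 0 < Derive f x ->
  exists d, 0 < d /\ (forall y, x - d < y < x -> f y < f x) /\
                     (forall y, x < y < x + d -> f x < f y).
Proof.
  intros Hf Hpos.
  destruct (proj1 (is_derive_Reals f x _) (Derive_correct f x Hf) _ Hpos) as [d Hd].
  assert (Hquot : forall y, Rabs (y - x) < d -> y <> x -> 0 < (f y - f x) / (y - x)).
  { intros y Hy Hyx.
    specialize (Hd (y - x) ltac:(lra) Hy); replace (x + (y - x)) with y in Hd by ring.
    apply Rabs_def2 in Hd; lra. }
  exists d; split; [apply cond_pos|split]; intros y Hy.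
  - pose proof (Hquot y ltac:(rewrite Rabs_left; lra) ltac:(lra)) as Hq.
    assert (Hyx : y - x < 0) by lra.
    apply Rdiv_pos_cases in Hq; lra.
  - pose proof (Hquot y ltac:(rewrite Rabs_right; lra) ltac:(lra)) as Hq.
    apply Rdiv_pos_cases in Hq; lra.
Qed.

Lemma Derive_neg_locally (f : R -> R) x : ex_derive f x -> Derive f x < 0 ->
  exists d, 0 < d /\ (forall y, x - d < y < x -> f x < f y) /\
                     (forall y, x < y < x + d -> f y < f x).
Proof.
  intros Hf Hneg.
  destruct (Derive_pos_locally (fun y => - f y) x) as [d [Hd [Hl Hr]]].
  - auto_derive; exact Hf.
  - rewrite Derive_opp; lra.
  - exists d; split; [exact Hd|split]; intros y Hy; [apply Hl in Hy | apply Hr in Hy]; lra.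
Qed.

Lemma le_of_left_limit (g : R -> R) a b c : a < b -> continuity_pt g b ->
  (forall r, a < r < b -> g r <= c) -> g b <= c.
Proof.
  intros Hab Hg Hle.
  apply (filterlim_le (F := at_left b) g (fun _ => c) (g b) c).
  - exists (mkposreal (b - a) ltac:(lra)); intros r Hr Hrb; apply Hle.
    apply Rabs_lt_between' in Hr; simpl in Hr; lra.
  - eapply filterlim_filter_le_1; [apply filter_le_within|].
    now apply continuity_pt_filterlim.
  - apply filterlim_const.
Qed.

Section CriticalPointsAreMaxima.

Variables (a b : R) (u : R -> R).
Hypothesis u_derivable : forall x, a < x < b -> ex_derive u x.
Hypothesis Derive_u_derivable : forall x, a < x < b -> ex_derive (Derive u) x.
Hypothesis critical_concave : forall x, a < x < b -> Derive u x = 0 -> Derive (Derive u) x < 0.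

Lemma critical_strict_local_max x : a < x < b -> Derive u x = 0 ->
  exists d, 0 < d /\ (forall y, x - d < y < x -> u y < u x) /\
                     (forall y, x < y < x + d -> u y < u x).
Proof.
  intros Hx Hcrit.
  destruct (Derive_neg_locally (Derive u) x (Derive_u_derivable x Hx) (critical_concave x Hx Hcrit))
    as [d [Hd [Hl Hr]]].
  set (e := Rmin d (Rmin (x - a) (b - x))).
  assert (He : 0 < e) by (unfold e; repeat apply Rmin_pos; lra).
  assert (e <= d /\ e <= x - a /\ e <= b - x) as (Hed & Hea & Heb).
  { unfold e; pose proof (Rmin_l d (Rmin (x - a) (b - x)));
    pose proof (Rmin_r d (Rmin (x - a) (b - x)));
    pose proof (Rmin_l (x - a) (b - x)); pose proof (Rmin_r (x - a) (b - x)); lra. }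
  exists e; split; [exact He|split]; intros y Hy.
  - apply Derive_pos_lt; [lra | intros z Hz; apply u_derivable; lra |].
    intros z Hz; rewrite <- Hcrit; apply Hl; lra.
  - apply Derive_neg_lt; [lra | intros z Hz; apply u_derivable; lra |].
    intros z Hz; rewrite <- Hcrit; apply Hr; lra.
Qed.

Lemma lt_right_of_Derive_nonpos x : a < x < b -> Derive u x <= 0 ->
  exists d, 0 < d /\ forall y, x < y < x + d -> u y < u x.
Proof.
  intros Hx [Hneg | Hcrit].
  - destruct (Derive_neg_locally u x (u_derivable x Hx) Hneg) as [d [Hd [_ Hr]]]; now exists d.
  - destruct (critical_strict_local_max x Hx Hcrit) as [d [Hd [_ Hr]]]; now exists d.
Qed.

Lemma lt_left_of_Derive_nonneg x : a < x < b -> 0 <= Derive u x ->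
  exists d, 0 < d /\ forall y, x - d < y < x -> u y < u x.
Proof.
  intros Hx [Hpos | Hcrit].
  - destruct (Derive_pos_locally u x (u_derivable x Hx) Hpos) as [d [Hd [Hl _]]]; now exists d.
  - destruct (critical_strict_local_max x Hx (eq_sym Hcrit)) as [d [Hd [Hl _]]]; now exists d.
Qed.

Lemma Derive_pos_at_min c e m : a < c -> e < b -> c <= m < e ->
  (forall y, c <= y <= e -> u m <= u y) -> 0 < Derive u m.
Proof.
  intros Hc He Hm Hmin; apply Rnot_le_lt; intros Hle.
  destruct (lt_right_of_Derive_nonpos m ltac:(lra) Hle) as [d [Hd Hr]].
  pose proof (Rmin_l d (e - m)); pose proof (Rmin_r d (e - m)).
  assert (0 < Rmin d (e - m)) by (apply Rmin_pos; lra).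
  set (y := m + Rmin d (e - m) / 2).
  pose proof (Hr y ltac:(unfold y; lra)); pose proof (Hmin y ltac:(unfold y; lra)); lra.
Qed.

Lemma Derive_neg_at_min c e m : a < c -> e < b -> c < m <= e ->
  (forall y, c <= y <= e -> u m <= u y) -> Derive u m < 0.
Proof.
  intros Hc He Hm Hmin; apply Rnot_le_lt; intros Hle.
  destruct (lt_left_of_Derive_nonneg m ltac:(lra) Hle) as [d [Hd Hl]].
  pose proof (Rmin_l d (m - c)); pose proof (Rmin_r d (m - c)).
  assert (0 < Rmin d (m - c)) by (apply Rmin_pos; lra).
  set (y := m - Rmin d (m - c) / 2).
  pose proof (Hl y ltac:(unfold y; lra)); pose proof (Hmin y ltac:(unfold y; lra)); lra.
Qed.

Lemma continuity_pt_on x y : a < x -> y < b -> forall z, x <= z <= y -> continuity_pt u z.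
Proof. intros Hx Hy z Hz; apply continuity_pt_of_ex_derive, u_derivable; lra. Qed.

Lemma Derive_neg_right_of_critical x : a < x < b -> Derive u x = 0 ->
  forall r, x < r < b -> Derive u r < 0.
Proof.
  intros Hx Hcrit r Hr; apply Rnot_le_lt; intros Hle.
  destruct (continuity_ab_min u x r ltac:(lra) (continuity_pt_on x r ltac:(lra) ltac:(lra)))
    as [m [Hmin Hm]].
  destruct (Req_dec m x) as [-> | Hmx].
  - pose proof (Derive_pos_at_min x r x ltac:(lra) ltac:(lra) ltac:(lra) Hmin); lra.
  - pose proof (Derive_neg_at_min x r m ltac:(lra) ltac:(lra) ltac:(lra) Hmin).
    destruct (Req_dec m r) as [-> | Hmr]; [lra|].
    pose proof (Derive_pos_at_min x r m ltac:(lra) ltac:(lra) ltac:(lra) Hmin); lra.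
Qed.

Lemma Derive_pos_left_of_critical x : a < x < b -> Derive u x = 0 ->
  forall r, a < r < x -> 0 < Derive u r.
Proof.
  intros Hx Hcrit r Hr; apply Rnot_le_lt; intros Hle.
  destruct (continuity_ab_min u r x ltac:(lra) (continuity_pt_on r x ltac:(lra) ltac:(lra)))
    as [m [Hmin Hm]].
  destruct (Req_dec m x) as [-> | Hmx].
  - pose proof (Derive_neg_at_min r x x ltac:(lra) ltac:(lra) ltac:(lra) Hmin); lra.
  - pose proof (Derive_pos_at_min r x m ltac:(lra) ltac:(lra) ltac:(lra) Hmin).
    destruct (Req_dec m r) as [-> | Hmr]; [lra|].
    pose proof (Derive_neg_at_min r x m ltac:(lra) ltac:(lra) ltac:(lra) Hmin); lra.
Qed.

End CriticalPointsAreMaxima.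

Definition potential (p lambda s : R) : R := / p * Rpower s p - lambda / 2 * s ^ 2.

Definition energy (p lambda : R) (u : R -> R) (r : R) : R :=
  / 2 * Derive u r ^ 2 + potential p lambda (u r).

Lemma is_derive_potential p lambda s : 0 < p -> 0 < s ->
  is_derive (potential p lambda) s (Rpower s (p - 1) - lambda * s).
Proof.
  intros Hp Hs.
  assert (Hpow : is_derive (fun s => Rpower s p) s (p * Rpower s (p - 1)))
    by now apply is_derive_Reals, derivable_pt_lim_power.
  assert (Hsq : is_derive (fun s : R => s ^ 2) s (2 * s)) by (auto_derive; [easy | ring]).
  unfold potential.
  replace (Rpower s (p - 1) - lambda * s)
    with (/ p * (p * Rpower s (p - 1)) - lambda / 2 * (2 * s)) by (field; lra).
  apply (is_derive_minus (fun s => / p * Rpower s p) (fun s => lambda / 2 * s ^ 2));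
    [apply is_derive_scal, Hpow | apply is_derive_scal, Hsq].
Qed.

Lemma is_derive_energy p lambda u r : 0 < p -> 0 < u r ->
  ex_derive u r -> ex_derive (Derive u) r ->
  is_derive (energy p lambda u) r
    (Derive u r * (Derive (Derive u) r + Rpower (u r) (p - 1) - lambda * u r)).
Proof.
  intros Hp Hu Hu' Hu''.
  assert (Hkin : is_derive (fun r => Derive u r ^ 2) r
                   (INR 2 * Derive (Derive u) r * Derive u r ^ 1))
    by now apply is_derive_pow, Derive_correct.
  assert (Hpot : is_derive (fun r => potential p lambda (u r)) r
                   (scal (Derive u r) (Rpower (u r) (p - 1) - lambda * u r)))
    by (apply (is_derive_comp (potential p lambda) u);
        [now apply is_derive_potential | now apply Derive_correct]).
  unfold energy.
  replace (Derive u r * (Derive (Derive u) r + Rpower (u r) (p - 1) - lambda * u r))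
    with (/ 2 * (INR 2 * Derive (Derive u) r * Derive u r ^ 1)
          + scal (Derive u r) (Rpower (u r) (p - 1) - lambda * u r))
    by (unfold scal; simpl; unfold mult; simpl; field).
  apply (is_derive_plus (fun r => / 2 * Derive u r ^ 2) (fun r => potential p lambda (u r)));
    [apply is_derive_scal, Hkin | exact Hpot].
Qed.

Lemma potential_ge p lambda s : 0 < p -> - (lambda / 2) * s ^ 2 <= potential p lambda s.
Proof.
  intros Hp; unfold potential.
  assert (0 <= / p * Rpower s p)
    by (apply Rmult_le_pos; [apply Rlt_le, Rinv_0_lt_compat, Hp | apply Rlt_le, exp_pos]).
  lra.
Qed.

Lemma Rpower_gt_of_potential_nonneg p lambda s : 2 < p -> 0 < s ->
  0 <= potential p lambda s -> lambda * s < Rpower s (p - 1).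
Proof.
  intros Hp Hs Hpot; unfold potential in Hpot.
  assert (Hsplit : Rpower s p = s * Rpower s (p - 1)).
  { replace p with (1 + (p - 1)) at 1 by ring; now rewrite Rpower_plus, Rpower_1. }
  rewrite Hsplit in Hpot.
  set (a := Rpower s (p - 1)) in *.
  assert (Ha : 0 < a) by apply exp_pos.
  assert (Hbound : p * lambda * s / 2 <= a).
  { assert (0 <= s * (a - p * lambda * s / 2)).
    { replace (s * (a - p * lambda * s / 2)) with (p * (/ p * (s * a) - lambda / 2 * s ^ 2))
        by (field; lra).
      apply Rmult_le_pos; lra. }
    nra. }
  destruct (Rle_or_lt lambda 0); nra.
Qed.

Section RadialSolution.

Variables (N : nat) (p lambda : R) (u : R -> R).
Hypothesis N_pos : (1 <= N)%nat.
Hypothesis p_gt2 : 2 < p.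
Hypothesis u_sol : pos_rad_sol N p lambda u.

Lemma is_derive_energy_sol r : 1 < r < 2 ->
  is_derive (energy p lambda u) r (- ((INR N - 1) / r) * Derive u r ^ 2).
Proof.
  intros Hr; destruct u_sol as (_ & Hder & _ & _ & Hpos & Hode).
  destruct (Hder r Hr) as [Hu' Hu''].
  replace (- ((INR N - 1) / r) * Derive u r ^ 2)
    with (Derive u r * (Derive (Derive u) r + Rpower (u r) (p - 1) - lambda * u r))
    by (rewrite <- (Hode r Hr); field; lra).
  apply is_derive_energy; [lra | apply Hpos, Hr | exact Hu' | exact Hu''].
Qed.

Lemma energy_nonincreasing x y : 1 < x <= y -> y < 2 ->
  energy p lambda u y <= energy p lambda u x.
Proof.
  intros Hx Hy.
  assert (HN : 0 <= INR N - 1) by (apply le_INR in N_pos; simpl in N_pos; lra).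
  apply Derive_nonpos_le; [lra | intros z Hz; eexists; apply is_derive_energy_sol; lra |].
  intros z Hz; rewrite (is_derive_unique _ _ _ (is_derive_energy_sol z ltac:(lra))).
  assert (0 <= (INR N - 1) / z) by (apply Rdiv_le_0_compat; lra).
  pose proof (pow2_ge_0 (Derive u z)); nra.
Qed.

Lemma potential_nonneg_at_critical r0 : 1 < r0 < 2 -> Derive u r0 = 0 ->
  0 <= potential p lambda (u r0).
Proof.
  intros Hr0 Hcrit; destruct u_sol as (Hcont & _ & _ & Hu2 & _ & _).
  assert (Henergy : energy p lambda u r0 = potential p lambda (u r0))
    by (unfold energy; rewrite Hcrit; ring).
  (* [Rpower 0 p = 1], so the potential itself is discontinuous at [u 2 = 0];
     pass to the limit in its lower bound instead. *)
  set (g r := - (lambda / 2) * (u r * u r)).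
  replace 0 with (g 2) by (unfold g; rewrite Hu2; ring).
  apply (le_of_left_limit g r0); [lra | |].
  - apply continuity_pt_mult; [apply continuity_pt_const; now intros ? ? |].
    apply continuity_pt_mult; apply Hcont; lra.
  - intros r Hr; rewrite <- Henergy.
    pose proof (potential_ge p lambda (u r) ltac:(lra)).
    pose proof (energy_nonincreasing r0 r ltac:(lra) ltac:(lra)).
    pose proof (pow2_ge_0 (Derive u r)).
    unfold g, energy in *; nra.
Qed.

Lemma Derive2_neg_at_critical r0 : 1 < r0 < 2 -> Derive u r0 = 0 ->
  Derive (Derive u) r0 < 0.
Proof.
  intros Hr0 Hcrit.
  pose proof (potential_nonneg_at_critical r0 Hr0 Hcrit) as Hpot.
  destruct u_sol as (_ & _ & _ & _ & Hpos & Hode).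
  pose proof (Rpower_gt_of_potential_nonneg p lambda (u r0) p_gt2 (Hpos r0 Hr0) Hpot).
  specialize (Hode r0 Hr0); rewrite Hcrit in Hode; lra.
Qed.

End RadialSolution.

Theorem lemma2p1 (N : nat) (p lambda : R) (u : R -> R)
  (hN : (2 <= N)%nat)
  (hp : subcritical N p)
  (hlam : Rbar_lt (Finite (- lambda)) (lambda1 N))
  (hu : pos_rad_sol N p lambda u)
  (huniq : forall v, pos_rad_sol N p lambda v -> forall r, 1 < r < 2 -> v r = u r) :
  exists rbar, 1 < rbar < 2 /\
    (forall r, 1 < r < 2 -> r <> rbar -> u r < u rbar) /\
    (forall r, 1 < r < rbar -> 0 < Derive u r) /\
    (forall r, rbar < r < 2 -> Derive u r < 0).
Proof.
  pose proof (Derive2_neg_at_critical N p lambda u ltac:(lia) (proj1 hp) hu) as concave.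
  destruct hu as (u_cont & u_der & u1 & u2 & u_pos & _).
  assert (u_der1 : forall x, 1 < x < 2 -> ex_derive u x) by (intros x Hx; apply u_der, Hx).
  assert (u_der2 : forall x, 1 < x < 2 -> ex_derive (Derive u) x) by (intros x Hx; apply u_der, Hx).
  destruct (continuity_ab_maj u 1 2 ltac:(lra) u_cont) as [rbar [Hmax Hrbar]].
  assert (Hin : 1 < rbar < 2).
  { pose proof (u_pos (3 / 2) ltac:(lra)); pose proof (Hmax (3 / 2) ltac:(lra)).
    destruct Hrbar as [[H1 | <-] [H2 | ->]]; lra. }
  assert (Hcrit : Derive u rbar = 0).
  { rewrite <- (Derive_Reals u rbar (ex_derive_Reals_0 u rbar (u_der1 rbar Hin))).
    apply (deriv_maximum u 1 2); try lra; intros x Hx1 Hx2; apply Hmax; lra. }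
  pose proof (Derive_pos_left_of_critical 1 2 u u_der1 u_der2 concave rbar Hin Hcrit) as Hleft.
  pose proof (Derive_neg_right_of_critical 1 2 u u_der1 u_der2 concave rbar Hin Hcrit) as Hright.
  exists rbar; split; [exact Hin | split; [| split; [exact Hleft | exact Hright]]].
  intros r Hr Hne; destruct (Rtotal_order r rbar) as [Hlt | [Heq | Hgt]]; [| contradiction |].
  - apply Derive_pos_lt; [lra | intros x Hx; apply u_der1; lra | intros x Hx; apply Hleft; lra].
  - apply Derive_neg_lt; [lra | intros x Hx; apply u_der1; lra | intros x Hx; apply Hright; lra].
Qed.
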